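(* Let $\mathbb{K}$ be an $\aleph_0$-complete field and $x=(x_1,\ldots,x_n)$. Let $F$ be a finite system of polynomial equations, with coefficients in $\mathbb{K}[\![x]\!]$, in unknowns $z_1,\ldots,z_q$ and some of their partial derivatives $\partial^{|j_1|}z_{i_1}/\partial x^{j_1},\ldots,\partial^{|j_s|}z_{i_s}/\partial x^{j_s}$, where $i_1,\ldots,i_s\in\{1,\ldots,q\}$ and $j_1,\ldots,j_s\in\mathbb{N}^n$. Then there exists a map $\tau:\mathbb{N}^{q+s}\to\mathbb{N}$ such that: if $c=(c_1,\ldots,c_q,c_{i_1,j_1},\ldots,c_{i_s,j_s})\in\mathbb{N}^{q+s}$ and $z'=(z'_1,\ldots,z'_q)\in\mathbb{K}[\![x]\!]^q$ satisfies $$F\left(z',\frac{\partial^{|j_1|}z'_{i_1}}{\partial x^{j_1}},\ldots,\frac{\partial^{|j_s|}z'_{i_s}}{\partial x^{j_s}}\right)\equiv 0 \text{ modulo } (x)^{\tau(c)},$$ $\mathrm{ord}(z'_i)=c_i$ for $i=1,\ldots,q$ and $\mathrm{ord}\left(\partial^{|j_k|}z'_{i_k}/\partial x^{j_k}\right)=c_{i_k,j_k}$ for $k=1,\ldots,s$, then there exists $z=(z_1,\ldots,z_q)\in\mathbb{K}[\![x]\!]^q$ which, together with its corresponding partial derivatives, is a solution of $F=0$ and satisfies $\mathrm{ord}(z_i)=c_i$ for all $i=1,\ldots,q$ and $\mathrm{ord}\left(\partial^{|j_k|}z_{i_k}/\partial x^{j_k}\right)=c_{i_k,j_k}$ for 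$k=1,\ldots,s$.
   Context: A field $\mathbb{K}$ is called $\aleph_0$-complete if every countable system $\mathcal S$ of polynomial equations with coefficients in $\mathbb{K}$ (in a countable number of indeterminates) has a solution in $\mathbb{K}$ if and only if every finite sub-system of $\mathcal S$ has a solution in $\mathbb{K}$. $(x)$ is the maximal ideal of $\mathbb{K}[\![x]\!]$; for $j=(j^1,\ldots,j^n)\in\mathbb{N}^n$, $|j|=j^1+\cdots+j^n$ and $\partial^{|j|}/\partial x^j$ denotes the formal partial derivative $\partial^{|j|}/\partial x_1^{j^1}\cdots\partial x_n^{j^n}$. For a power series $g$, $\mathrm{ord}(g)$ is the smallest total degree of a monomial appearing in $g$ with nonzero coefficient. *)

From mathcomp Require Import all_boot all_order all_algebra.
Set Implicit Arguments. Unset Strict Implicit. Unset Printing Implicit Defensive.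
Import GRing.Theory.
Local Open Scope ring_scope.

Definition mon (n : nat) := {ffun 'I_n -> nat}.

Definition mdeg n (m : mon n) : nat := (\sum_(i < n) m i)%N.

(* a formal power series is its coefficient function *)
Definition series (K : fieldType) (n : nat) := mon n -> K.

Section Series.
Variables (K : fieldType) (n : nat).

Definition szero : series K n := fun _ => 0.
Definition sone : series K n := fun m => if m == [ffun=> 0%N] then 1 else 0.
Definition sadd (f g : series K n) : series K n := fun m => f m + g m.

(* Cauchy product: (fg)_m = sum_{a <= m} f_a g_{m-a}; the exponent a is
   enumerated as a finite function with values bounded by |m|. *)
Definition smul (f g : series K n) : series K n := fun m =>
  \sum_(a : {ffun 'I_n -> 'I_(mdeg m).+1} | [forall i, (a i <= m i)%N])
     f [ffun i => nat_of_ord (a i)] * g [ffun i => (m i - a i)%N].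

Definition sexp (f : series K n) (e : nat) : series K n := iter e (smul f) sone.

(* formal partial derivative d^{|j|} f / dx^j :
   coefficient of x^m is  prod_i (m_i + j_i)(m_i + j_i - 1)...(m_i + 1) * f_{m+j} *)
Definition sderiv (j : mon n) (f : series K n) : series K n := fun m =>
  (\prod_(i < n) ((m i + j i) ^_ (j i))%N%:R) * f [ffun i => (m i + j i)%N].

Definition has_ord (g : series K n) (c : nat) : Prop :=
  (exists m : mon n, mdeg m = c /\ g m != 0) /\
  (forall m : mon n, (mdeg m < c)%N -> g m = 0).

Definition cong0_mod (g : series K n) (t : nat) : Prop :=
  forall m : mon n, (mdeg m < t)%N -> g m = 0.

Definition series_eq0 (g : series K n) : Prop := forall m : mon n, g m = 0.

(* polynomial in N indeterminates with coefficients in K[[x]]: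
   a finite list of terms (coefficient, exponent vector) *)
Definition spoly (N : nat) := seq (series K n * {ffun 'I_N -> nat}).

Definition spoly_eval N (P : spoly N) (y : 'I_N -> series K n) : series K n :=
  foldr (fun (t : series K n * {ffun 'I_N -> nat}) acc => sadd (smul t.1 (\big[smul/sone]_(v < N) sexp (y v) (t.2 v))) acc)
        szero P.

End Series.

Definition pde_vars (K : fieldType) (n q s : nat) (ii : 'I_s -> 'I_q)
  (jj : 'I_s -> mon n) (z : 'I_q -> series K n) (v : 'I_(q + s)) : series K n :=
  match split v with
  | inl i => z i
  | inr k => sderiv (jj k) (z (ii k))
  end.

(* polynomial with coefficients in K in the countably many indeterminates
   y_0, y_1, ...: a finite list of terms (c, e) meaning c * prod_v y_v^(e`_v) *)
Definition cpoly (K : fieldType) := seq (K * seq nat).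

Definition cpoly_eval (K : fieldType) (P : cpoly K) (a : nat -> K) : K :=
  \sum_(t <- P) t.1 * \prod_(v < size t.2) a v ^+ nth 0%N t.2 v.

Definition aleph0_complete (K : fieldType) : Prop :=
  forall S : nat -> cpoly K,
    (exists a : nat -> K, forall k, cpoly_eval (S k) a = 0) <->
    (forall I : seq nat, exists a : nat -> K,
        forall k, k \in I -> cpoly_eval (S k) a = 0).

From mathcomp Require Import all_boot all_order all_algebra.
From Stdlib Require Import Classical ClassicalEpsilon FunctionalExtensionality.
Set Implicit Arguments. Unset Strict Implicit. Unset Printing Implicit Defensive.
Import GRing.Theory.
Local Open Scope ring_scope.

(** Solutions with prescribed orders are the common zeros in K of countably many
  polynomial equations in the coefficients of the unknowns: the coefficients of
  F(z) vanish, the coefficients of the z_i and their derivatives below the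
  prescribed orders vanish, and some coefficient y_m of the prescribed degree c is
  nonzero, expressed with auxiliary unknowns w as sum_(|m| = c) y_m w_m = 1.  A finite
  subsystem only involves coefficients of F(z) up to some degree, so it is solved
  by any approximate solution of high enough precision, and aleph_0-completeness
  produces an exact solution.  Hence, for each c, either approximate solutions of
  every precision exist and so does an exact one, or tau(c) can be taken to be a
  precision at which no approximate solution exists. *)

Section PolynomialFunctions.
Variable K : fieldType.

Definition cpoly_fun (f : (nat -> K) -> K) :=
  exists P : cpoly K, forall a, cpoly_eval P a = f a.

Lemma cpoly_fun_ext f g : cpoly_fun f -> (forall a, f a = g a) -> cpoly_fun g.
Proof. by move=> [P HP] fg; exists P => a; rewrite HP fg. Qed.

Lemma cpoly_fun_cst x : cpoly_fun (fun _ => x).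
Proof. by exists [:: (x, [::])] => a; rewrite /cpoly_eval big_seq1 big_ord0 mulr1. Qed.

Lemma cpoly_fun_var v : cpoly_fun (fun a => a v).
Proof.
exists [:: (1, rcons (nseq v 0%N) 1%N)] => a.
rewrite /cpoly_eval big_seq1 /= mul1r size_rcons size_nseq big_ord_recr /=.
rewrite nth_rcons size_nseq ltnn eqxx expr1 big1 ?mul1r // => i _.
by rewrite nth_rcons size_nseq ltn_ord nth_nseq ltn_ord expr0.
Qed.

Lemma cpoly_funD f g : cpoly_fun f -> cpoly_fun g -> cpoly_fun (fun a => f a + g a).
Proof. by move=> [P HP] [Q HQ]; exists (P ++ Q) => a; rewrite -HP -HQ /cpoly_eval big_cat. Qed.

Definition cmonomial (e : seq nat) (a : nat -> K) := \prod_(v < size e) a v ^+ nth 0%N e v.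

Lemma cmonomial_widen e N a : (size e <= N)%N ->
  cmonomial e a = \prod_(v < N) a v ^+ nth 0%N e v.
Proof.
move=> leN; rewrite /cmonomial (big_ord_widen N (fun v => a v ^+ nth 0%N e v) leN).
rewrite big_mkcond; apply: eq_bigr => v _; case: ifP => // /negbT.
by rewrite -leqNgt => le_e_v; rewrite nth_default // expr0.
Qed.

Definition addn_seq (e1 e2 : seq nat) :=
  mkseq (fun v => nth 0%N e1 v + nth 0%N e2 v)%N (maxn (size e1) (size e2)).

Lemma cmonomialD e1 e2 a : cmonomial (addn_seq e1 e2) a = cmonomial e1 a * cmonomial e2 a.
Proof.
rewrite (@cmonomial_widen e1 (maxn (size e1) (size e2))) ?leq_maxl //.
rewrite (@cmonomial_widen e2 (maxn (size e1) (size e2))) ?leq_maxr //.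
rewrite /cmonomial size_mkseq -big_split; apply: eq_bigr => v _.
by rewrite nth_mkseq // exprD.
Qed.

Lemma cpoly_funM f g : cpoly_fun f -> cpoly_fun g -> cpoly_fun (fun a => f a * g a).
Proof.
move=> [P HP] [Q HQ].
exists [seq (t.1 * u.1, addn_seq t.2 u.2) | t <- P, u <- Q] => a.
rewrite -HP -HQ /cpoly_eval (big_allpairs_dep (h := fun t u => (t.1 * u.1, addn_seq t.2 u.2))).
rewrite mulr_suml; apply: eq_bigr => t _; rewrite mulr_sumr; apply: eq_bigr => u _ /=.
change (t.1 * u.1 * cmonomial (addn_seq t.2 u.2) a =
        t.1 * cmonomial t.2 a * (u.1 * cmonomial u.2 a)).
by rewrite cmonomialD mulrACA.
Qed.

Lemma cpoly_fun_sum (I : Type) (r : seq I) (P : pred I) (f : I -> (nat -> K) -> K) :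
  (forall i, cpoly_fun (f i)) -> cpoly_fun (fun a => \sum_(i <- r | P i) f i a).
Proof.
move=> fP; elim: r => [|i r IHr].
  by apply: cpoly_fun_ext (cpoly_fun_cst 0) _ => a; rewrite big_nil.
case: (boolP (P i)) => Pi.
  by apply: cpoly_fun_ext (cpoly_funD (fP i) IHr) _ => a; rewrite big_cons Pi.
by apply: cpoly_fun_ext IHr _ => a; rewrite big_cons (negbTE Pi).
Qed.

Lemma aleph0_complete_countable (E : countType) (f : E -> (nat -> K) -> K) :
  aleph0_complete K -> (forall e, cpoly_fun (f e)) ->
  (forall I : seq E, exists a, forall e, e \in I -> f e a = 0) ->
  exists a, forall e, f e a = 0.
Proof.
move=> K_complete /ClassicalEpsilon.choice [P HP] finite_sol.
pose S k := if unpickle k is Some e then P e else [::].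
have [a Sa] : exists a, forall k, cpoly_eval (S k) a = 0.
  apply/K_complete => I; have [a Ia] := finite_sol (pmap unpickle I).
  exists a => k kI; rewrite /S; case Dk: (unpickle k) => [e|]; last by rewrite /cpoly_eval big_nil.
  by rewrite HP Ia // mem_pmap; apply/mapP; exists k.
by exists a => e; have := Sa (pickle e); rewrite /S pickleK HP.
Qed.

End PolynomialFunctions.

Section CoefficientwisePolynomial.
Variables (K : fieldType) (n : nat).

Definition coef_cpoly_fun (S : (nat -> K) -> series K n) :=
  forall m, cpoly_fun (fun a => S a m).

Lemma coef_cpoly_fun_cst g : coef_cpoly_fun (fun _ => g).
Proof. by move=> m; apply: cpoly_fun_cst. Qed.

Lemma coef_cpoly_funD S T :
  coef_cpoly_fun S -> coef_cpoly_fun T -> coef_cpoly_fun (fun a => sadd (S a) (T a)).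
Proof. by move=> SP TP m; apply: cpoly_funD. Qed.

Lemma coef_cpoly_funM S T :
  coef_cpoly_fun S -> coef_cpoly_fun T -> coef_cpoly_fun (fun a => smul (S a) (T a)).
Proof. by move=> SP TP m; apply: cpoly_fun_sum => b; apply: cpoly_funM. Qed.

Lemma coef_cpoly_funX S e : coef_cpoly_fun S -> coef_cpoly_fun (fun a => sexp (S a) e).
Proof.
move=> SP; elim: e => [|e IHe]; first exact: coef_cpoly_fun_cst.
exact: coef_cpoly_funM.
Qed.

Lemma coef_cpoly_fun_prod (I : Type) (r : seq I) (S : (nat -> K) -> I -> series K n) :
  (forall i, coef_cpoly_fun (S^~ i)) ->
  coef_cpoly_fun (fun a => \big[@smul K n/@sone K n]_(i <- r) S a i).
Proof.
move=> SP; elim: r => [|i r IHr] m.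
  by apply: cpoly_fun_ext (coef_cpoly_fun_cst (@sone K n) m) _ => a; rewrite big_nil.
by apply: cpoly_fun_ext (coef_cpoly_funM (SP i) IHr m) _ => a; rewrite big_cons.
Qed.

Lemma coef_cpoly_fun_deriv j S : coef_cpoly_fun S -> coef_cpoly_fun (fun a => sderiv j (S a)).
Proof. by move=> SP m; apply: cpoly_funM; [apply: cpoly_fun_cst | apply: SP]. Qed.

Lemma coef_cpoly_fun_spoly_eval N (P : spoly K n N) (Y : (nat -> K) -> 'I_N -> series K n) :
  (forall v, coef_cpoly_fun (Y^~ v)) -> coef_cpoly_fun (fun a => spoly_eval P (Y a)).
Proof.
move=> YP; elim: P => [|t P IHP]; first exact: coef_cpoly_fun_cst.
apply: coef_cpoly_funD IHP; apply: coef_cpoly_funM; first exact: coef_cpoly_fun_cst.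
by apply: coef_cpoly_fun_prod => v; apply: coef_cpoly_funX.
Qed.

End CoefficientwisePolynomial.

Section Order.
Variables (K : fieldType) (n : nat).

Definition mon_of_bounded N (b : {ffun 'I_n -> 'I_N}) : mon n := [ffun i => nat_of_ord (b i)].

Lemma mon_of_bounded_inj N : injective (@mon_of_bounded N).
Proof.
move=> b b' /ffunP eq_bb'; apply/ffunP => i; apply: val_inj.
by have := eq_bb' i; rewrite !ffunE.
Qed.

(* The monomials of degree c, enumerated through exponents bounded by c. *)
Definition ord_pairing (g w : series K n) (c : nat) : K :=
  \sum_(b : {ffun 'I_n -> 'I_c.+1} | mdeg (mon_of_bounded b) == c)
    g (mon_of_bounded b) * w (mon_of_bounded b).

Lemma has_ordP (g : series K n) c :
  has_ord g c <-> cong0_mod g c /\ exists w, ord_pairing g w c = 1.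
Proof.
split=> [[[m0 [deg_m0 g_m0]] g_lt] | [g_lt [w gw1]]].
  split=> //; exists (fun m => if m == m0 then (g m0)^-1 else 0).
  pose b0 : {ffun 'I_n -> 'I_c.+1} := [ffun i => inord (m0 i)].
  have b0E : mon_of_bounded b0 = m0.
    apply/ffunP => i; rewrite !ffunE inordK // ltnS -deg_m0 /mdeg (bigD1 i) //=.
    exact: leq_addr.
  rewrite /ord_pairing (bigD1 b0) /=; last by rewrite b0E deg_m0.
  rewrite b0E eqxx mulfV // big1 ?addr0 // => b /andP [_ b_b0].
  have -> : (mon_of_bounded b == m0) = false.
    by rewrite -b0E (inj_eq (@mon_of_bounded_inj _)) (negbTE b_b0).
  by rewrite mulr0.
split=> //; apply: NNPP => no_m0; move/eqP: gw1; apply/negP.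
rewrite /ord_pairing big1 1?eq_sym ?oner_eq0 // => b /eqP deg_b.
have -> : g (mon_of_bounded b) = 0.
  by apply/eqP/negPn/negP => nz; apply: no_m0; exists (mon_of_bounded b).
by rewrite mul0r.
Qed.

End Order.

Section PolynomialSystem.
Variables (K : fieldType) (n q s : nat) (ii : 'I_s -> 'I_q) (jj : 'I_s -> mon n).
Variables (r : nat) (F : 'I_r -> spoly K n (q + s)) (c : {ffun 'I_(q + s) -> nat}).

Definition pde_solution (z : 'I_q -> series K n) :=
  forall e, series_eq0 (spoly_eval (F e) (pde_vars ii jj z)).

Definition pde_approx_solution (t : nat) (z : 'I_q -> series K n) :=
  forall e, cong0_mod (spoly_eval (F e) (pde_vars ii jj z)) t.

Definition has_orders (z : 'I_q -> series K n) :=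
  forall v, has_ord (pde_vars ii jj z v) (c v).

Lemma has_ordersP z :
  has_orders z <->
  (forall i, has_ord (z i) (c (lshift s i))) /\
  (forall k, has_ord (sderiv (jj k) (z (ii k))) (c (rshift q k))).
Proof.
split=> [z_ord | [zi_ord zk_ord] v].
  split=> [i|k].
    by have := z_ord (lshift s i); rewrite /pde_vars -/(unsplit (inl i)) unsplitK.
  by have := z_ord (rshift q k); rewrite /pde_vars -/(unsplit (inr k)) unsplitK.
by rewrite /pde_vars -{2}(splitK v); case: (split v).
Qed.

(* Unknowns: the coefficients z_i[m], and the auxiliary w_v[m] certifying that
   the coefficients of degree c v of the v-th variable do not all vanish. *)
Definition unknown := ('I_q * mon n + 'I_(q + s) * mon n)%type.

Definition coef_z (a : nat -> K) (i : 'I_q) : series K n :=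
  fun m => a (pickle (inl (i, m) : unknown)).

Definition coef_w (a : nat -> K) (v : 'I_(q + s)) : series K n :=
  fun m => a (pickle (inr (v, m) : unknown)).

Definition assignment (z : 'I_q -> series K n) (w : 'I_(q + s) -> series K n) : nat -> K :=
  fun k => match unpickle k : option unknown with
  | Some (inl (i, m)) => z i m
  | Some (inr (v, m)) => w v m
  | None => 0
  end.

Lemma coef_z_assignment z w : coef_z (assignment z w) = z.
Proof.
by apply: functional_extensionality => i; apply: functional_extensionality => m;
  rewrite /coef_z /assignment pickleK.
Qed.

Lemma coef_w_assignment z w : coef_w (assignment z w) = w.
Proof.
by apply: functional_extensionality => v; apply: functional_extensionality => m;
  rewrite /coef_w /assignment pickleK.
Qed.

Definition equation := ('I_r * mon n + 'I_(q + s) * mon n + 'I_(q + s))%type.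

Definition residual (k : equation) (a : nat -> K) : K :=
  let y := pde_vars ii jj (coef_z a) in
  match k with
  | inl (inl (e, m)) => spoly_eval (F e) y m
  | inl (inr (v, m)) => if (mdeg m < c v)%N then y v m else 0
  | inr v => ord_pairing (y v) (coef_w a v) (c v) - 1
  end.

Definition equation_degree (k : equation) : nat :=
  if k is inl (inl (_, m)) then mdeg m else 0.

Lemma coef_cpoly_fun_pde_vars v : coef_cpoly_fun (fun a => pde_vars ii jj (coef_z a) v).
Proof.
rewrite /pde_vars; case: (split v) => [i|k] m; first exact: cpoly_fun_var.
by apply: coef_cpoly_fun_deriv => m'; apply: cpoly_fun_var.
Qed.

Lemma cpoly_fun_residual k : cpoly_fun (residual k).
Proof.
case: k => [[[e m]|[v m]]|v]; rewrite /residual /=.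
- exact: coef_cpoly_fun_spoly_eval coef_cpoly_fun_pde_vars m.
- by case: (mdeg m < c v)%N; [apply: coef_cpoly_fun_pde_vars | apply: cpoly_fun_cst].
- apply: cpoly_funD (cpoly_fun_cst _); apply: cpoly_fun_sum => b.
  by apply: cpoly_funM; [apply: coef_cpoly_fun_pde_vars | apply: cpoly_fun_var].
Qed.

Lemma residual_eq0_solution a :
  (forall k, residual k a = 0) -> pde_solution (coef_z a) /\ has_orders (coef_z a).
Proof.
move=> res0; split=> [e m | v]; first exact: (res0 (inl (inl (e, m)))).
apply/has_ordP; split=> [m lt_m_c|].
  by have := res0 (inl (inr (v, m))); rewrite /= lt_m_c.
by exists (coef_w a v); apply/eqP; rewrite -subr_eq0; apply/eqP/(res0 (inr v)).
Qed.

Lemma approx_solution_residual t z :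
  pde_approx_solution t z -> has_orders z ->
  exists a, forall k, (equation_degree k < t)%N -> residual k a = 0.
Proof.
move=> z_approx /(_ _)/has_ordP z_ord.
have /ClassicalEpsilon.choice [w zw1] v :
  exists w, ord_pairing (pde_vars ii jj z v) w (c v) = 1 by case: (z_ord v).
exists (assignment z w) => -[[[e m]|[v m]]|v] /= deg_k; rewrite coef_z_assignment.
- exact: z_approx.
- by case: ifP => // lt_m_c; apply: (z_ord v).1.
- by rewrite coef_w_assignment zw1 subrr.
Qed.

Lemma pde_solution_of_approx :
  aleph0_complete K ->
  (forall t, exists z, pde_approx_solution t z /\ has_orders z) ->
  exists z, pde_solution z /\ has_orders z.
Proof.
move=> K_complete approx.
have [a res0] : exists a, forall k, residual k a = 0.
  apply: aleph0_complete_countable K_complete cpoly_fun_residual _ => I.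
  have [z [z_approx z_ord]] := approx (\max_(k <- I) equation_degree k).+1.
  have [a res0] := approx_solution_residual z_approx z_ord.
  by exists a => k kI; apply: res0; rewrite ltnS (@leq_bigmax_seq _ I xpredT).
by exists (coef_z a); apply: residual_eq0_solution.
Qed.

Lemma exists_sufficient_precision :
  aleph0_complete K ->
  exists t, forall z', pde_approx_solution t z' -> has_orders z' ->
    exists z, pde_solution z /\ has_orders z.
Proof.
move=> K_complete.
case: (classic (forall t, exists z, pde_approx_solution t z /\ has_orders z)) => [approx|].
  by exists 0%N => _ _ _; apply: pde_solution_of_approx.
move=> /not_all_ex_not [t no_approx]; exists t => z' z'_approx z'_ord.
by case: no_approx; exists z'.
Qed.

End PolynomialSystem.

Theorem corollary4p3 (K : fieldType) (n q s : nat)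
  (ii : 'I_s -> 'I_q) (jj : 'I_s -> mon n)
  (r : nat) (F : 'I_r -> spoly K n (q + s)) :
  aleph0_complete K ->
  exists tau : {ffun 'I_(q + s) -> nat} -> nat,
    forall (c : {ffun 'I_(q + s) -> nat}) (z' : 'I_q -> series K n),
      (forall e : 'I_r, cong0_mod (spoly_eval (F e) (pde_vars ii jj z')) (tau c)) ->
      (forall i : 'I_q, has_ord (z' i) (c (lshift s i))) ->
      (forall k : 'I_s, has_ord (sderiv (jj k) (z' (ii k))) (c (rshift q k))) ->
      exists z : 'I_q -> series K n,
        (forall e : 'I_r, series_eq0 (spoly_eval (F e) (pde_vars ii jj z))) /\
        (forall i : 'I_q, has_ord (z i) (c (lshift s i))) /\
        (forall k : 'I_s, has_ord (sderiv (jj k) (z (ii k))) (c (rshift q k))).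
Proof.
move=> K_complete.
have /ClassicalEpsilon.choice [tau tauP] :=
  fun c => exists_sufficient_precision ii jj F c K_complete.
exists tau => c z' z'_approx z'_ord_i z'_ord_k.
have [|z [z_sol /has_ordersP z_ord]] := tauP c z' z'_approx.
  by apply/has_ordersP.
by exists z.
Qed.
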